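(* $F_\tau'=F_\tau''$, i.e. the commutator subgroup $[F_\tau,F_\tau]$ is equal to its own commutator subgroup.
   Context: Let $\tau=(\sqrt5-1)/2$. $F_\tau$ is the group, under composition, of orientation-preserving homeomorphisms of $[0,1]$ that are piecewise linear with finitely many breakpoints, all breakpoints in $\mathbb{Z}[\tau]=\{a+b\tau:a,b\in\mathbb{Z}\}$ and all slopes integer powers of $\tau$. $F_\tau'=[F_\tau,F_\tau]$ and $F_\tau''=[F_\tau',F_\tau']$. *)

From Stdlib Require Import Reals ZArith.
Open Scope R_scope.

Definition tau : R := (sqrt 5 - 1) / 2.

Definition in_Ztau (x : R) : Prop :=
  exists a b : Z, x = IZR a + IZR b * tau.

(* f : R -> R represents an element of F_tau: it is the identity outside
   [0,1], fixes 0 and 1, and there is a subdivision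
   0 = xs 0 < xs 1 < ... < xs n = 1 of [0,1] with all subdivision points in
   Z[tau] such that on each [xs i, xs (i+1)] the map f is affine with slope
   tau^(ks i), ks i an integer.  (Agreement on the shared endpoints forces
   continuity; positive slopes plus f 0 = 0, f 1 = 1 make f an
   orientation-preserving homeomorphism of [0,1].) *)
Definition in_Ftau (f : R -> R) : Prop :=
  (forall x, (x < 0 \/ 1 < x) -> f x = x) /\
  f 0 = 0 /\ f 1 = 1 /\
  exists (n : nat) (xs : nat -> R) (ks : nat -> Z),
    (1 <= n)%nat /\ xs 0%nat = 0 /\ xs n = 1 /\
    (forall i, (i <= n)%nat -> in_Ztau (xs i)) /\
    (forall i, (i < n)%nat -> xs i < xs (S i)) /\
    (forall i, (i < n)%nat -> forall x, xs i <= x <= xs (S i) ->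
        f x = f (xs i) + powerRZ tau (ks i) * (x - xs i)).

Definition is_inv (f g : R -> R) : Prop :=
  forall x, f (g x) = x /\ g (f x) = x.

(* The commutator subgroup [H,H] of a group H of maps (group law =
   composition): all finite products of commutators a^-1 b^-1 a b with
   a, b in H.  (Inverses of commutators are commutators, so this set is
   the subgroup generated by the commutators.) *)
Inductive derived (H : (R -> R) -> Prop) : (R -> R) -> Prop :=
| derived_id : derived H (fun x => x)
| derived_step : forall a ai b bi g,
    H a -> H b -> is_inv a ai -> is_inv b bi -> derived H g ->
    derived H (fun x => ai (bi (a (b (g x))))).

Definition Ftau' : (R -> R) -> Prop := derived in_Ftau.
Definition Ftau'' : (R -> R) -> Prop := derived Ftau'.

(* Every element of F_tau is a product of elements supported in compact subintervals of
   (0,1) and of two elements [bump_at_0], [bump_at_1], supported near 0 and near 1, that adjust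
   the slopes tau^p at 0 and tau^q at 1.  Since F_tau'' is normal in F_tau, for each x the
   elements y with [x,y] in F_tau'' form a subgroup, so it is enough to treat generators.
   For f, g supported in a compact interval P, pick h in F_tau moving P off itself; then
   [f,g] = [f,k] with k = g h^-1 g^-1 h in F_tau'.  A second displacement, of an interval
   containing the supports of f and k, gives [k,f] = [k,m] with m in F_tau', hence
   [f,g] = [k,m]^-1 is in F_tau''.  The other generators reduce to this case: bump_at_0 and
   bump_at_1 commute, bump_at_0 is a compactly supported element times an element supported
   to the left of any given compact support, and bump_at_1 is the mirror image of bump_at_0. *)

From Stdlib Require Import Reals Lra Lia Nsatz.
From Stdlib Require Import IndefiniteDescription FunctionalExtensionality Classical.
Open Scope R_scope.

(** * The golden ratio and Z[tau] *)

Lemma tau_sq : tau * tau = 1 - tau.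
Proof.
  unfold tau. assert (Hs := sqrt_sqrt 5 ltac:(lra)).
  replace ((sqrt 5 - 1) / 2 * ((sqrt 5 - 1) / 2))
    with ((sqrt 5 * sqrt 5 - 2 * sqrt 5 + 1) / 4) by field.
  rewrite Hs. field.
Qed.

Lemma tau_bounds : 0 < tau < 1.
Proof.
  unfold tau. assert (Hs := sqrt_sqrt 5 ltac:(lra)). assert (H0 := sqrt_pos 5).
  assert (1 < sqrt 5 < 3) by nra. lra.
Qed.

Lemma tau_gt_half : 1 / 2 < tau.
Proof. assert (H := tau_sq). assert (Hb := tau_bounds). nra. Qed.

Lemma tau_pow2 : tau ^ 2 = 1 - tau.
Proof. rewrite <- tau_sq. ring. Qed.

Notation tpow := (powerRZ tau).

Lemma tpow_pos k : 0 < tpow k.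
Proof. apply powerRZ_lt, tau_bounds. Qed.

Lemma tpow_neq0 k : tpow k <> 0.
Proof. apply Rgt_not_eq, tpow_pos. Qed.

Lemma tpow_add j k : tpow (j + k) = tpow j * tpow k.
Proof. apply powerRZ_add. apply Rgt_not_eq, tau_bounds. Qed.

Lemma tpow_1 : tpow 1 = tau.
Proof. apply Rmult_1_r. Qed.

Lemma tau_inv : / tau = 1 + tau.
Proof.
  pose proof tau_sq. pose proof tau_bounds. field_simplify_eq; lra.
Qed.

Lemma tpow_m1 : tpow (-1) = 1 + tau.
Proof. simpl. rewrite Rmult_1_r. apply tau_inv. Qed.

Lemma in_Ztau_IZR z : in_Ztau (IZR z).
Proof. exists z, 0%Z. ring. Qed.

Lemma in_Ztau_0 : in_Ztau 0.
Proof. exact (in_Ztau_IZR 0). Qed.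

Lemma in_Ztau_1 : in_Ztau 1.
Proof. exact (in_Ztau_IZR 1). Qed.

Lemma in_Ztau_tau : in_Ztau tau.
Proof. exists 0%Z, 1%Z. ring. Qed.

Lemma in_Ztau_add x y : in_Ztau x -> in_Ztau y -> in_Ztau (x + y).
Proof.
  intros [a [b ->]] [c [d ->]]. exists (a + c)%Z, (b + d)%Z. rewrite !plus_IZR. ring.
Qed.

Lemma in_Ztau_opp x : in_Ztau x -> in_Ztau (- x).
Proof. intros [a [b ->]]. exists (- a)%Z, (- b)%Z. rewrite !opp_IZR. ring. Qed.

Lemma in_Ztau_sub x y : in_Ztau x -> in_Ztau y -> in_Ztau (x - y).
Proof. intros. apply in_Ztau_add, in_Ztau_opp; assumption. Qed.

Lemma in_Ztau_mul x y : in_Ztau x -> in_Ztau y -> in_Ztau (x * y).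
Proof.
  intros [a [b ->]] [c [d ->]]. exists (a * c + b * d)%Z, (a * d + b * c - b * d)%Z.
  rewrite !minus_IZR, !plus_IZR, !mult_IZR. assert (H := tau_sq). nsatz.
Qed.

Lemma in_Ztau_pow x n : in_Ztau x -> in_Ztau (x ^ n).
Proof.
  intros Hx. induction n as [|n IH]; [apply in_Ztau_1 | apply in_Ztau_mul; assumption].
Qed.

Lemma in_Ztau_tpow k : in_Ztau (tpow k).
Proof.
  destruct k; simpl.
  - apply in_Ztau_1.
  - apply in_Ztau_pow, in_Ztau_tau.
  - rewrite <- pow_inv, tau_inv.
    apply in_Ztau_pow, in_Ztau_add; [apply in_Ztau_1 | apply in_Ztau_tau].
Qed.

Ltac in_Ztau_auto :=
  repeat first
    [ assumption | apply in_Ztau_0 | apply in_Ztau_1 | apply in_Ztau_tau | apply in_Ztau_tpow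
    | apply in_Ztau_pow | apply in_Ztau_add | apply in_Ztau_sub | apply in_Ztau_mul
    | apply in_Ztau_opp ].

(** * Piecewise linear maps *)

Lemma affine_preimage_between K u v c y :
  0 < K -> c <= y <= c + K * (v - u) -> u <= u + (y - c) / K <= v.
Proof.
  intros HK Hy. assert (E : K * ((y - c) / K) = y - c) by (field; lra).
  split; nra.
Qed.

Definition affine_on (f : R -> R) (u v : R) (k : Z) : Prop :=
  forall x, u <= x <= v -> f x = f u + tpow k * (x - u).

Inductive pl_on (f : R -> R) : R -> R -> Prop :=
| pl_on_affine u v k :
    u < v -> in_Ztau u -> in_Ztau v -> affine_on f u v k -> pl_on f u v
| pl_on_cat u v w : pl_on f u v -> pl_on f v w -> pl_on f u w.

Section PiecewiseLinear.
Variable f : R -> R.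

Lemma pl_on_lt u v : pl_on f u v -> u < v.
Proof. induction 1; lra. Qed.

Lemma pl_on_Ztau_image u v : pl_on f u v -> in_Ztau (f u) -> in_Ztau (f v).
Proof.
  induction 1 as [u v k Huv Hu Hv Hf|]; intros Hfu; auto.
  rewrite Hf by lra. in_Ztau_auto.
Qed.

Lemma pl_on_increasing u v :
  pl_on f u v -> forall x y, u <= x -> x < y -> y <= v -> f x < f y.
Proof.
  induction 1 as [u v k Huv _ _ Hf| u v w H1 IH1 H2 IH2]; intros x y Hx Hxy Hy.
  - rewrite (Hf x), (Hf y) by lra.
    assert (Hk := tpow_pos k). nra.
  - apply pl_on_lt in H1. apply pl_on_lt in H2.
    destruct (Rle_lt_dec y v); [apply IH1; lra|].
    destruct (Rle_lt_dec v x); [apply IH2; lra|].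
    apply Rlt_trans with (f v); [apply IH1 | apply IH2]; lra.
Qed.

Lemma pl_on_piece u v c k : u < v -> in_Ztau u -> in_Ztau v ->
  (forall x, u <= x <= v -> f x = c + tpow k * (x - u)) -> pl_on f u v.
Proof.
  intros Huv Hu Hv Hf. apply (pl_on_affine f u v k); auto.
  intros x Hx. rewrite (Hf x Hx), (Hf u) by lra. ring.
Qed.

Lemma pl_on_split u w : pl_on f u w ->
  forall m, u < m < w -> in_Ztau m -> pl_on f u m /\ pl_on f m w.
Proof.
  induction 1 as [u v k Huv Hu Hv Hf| u v w H1 IH1 H2 IH2]; intros m Hm HZm.
  - split.
    + apply (pl_on_affine f u m k); auto; [lra|]. intros x Hx; apply Hf; lra.
    + apply (pl_on_affine f m v k); auto; [lra|].
      intros x Hx. rewrite (Hf x), (Hf m) by lra. ring.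
  - assert (u < v) by (eapply pl_on_lt; eauto). assert (v < w) by (eapply pl_on_lt; eauto).
    destruct (Rtotal_order m v) as [Hl|[->|Hg]].
    + destruct (IH1 m) as [A1 A2]; auto; [lra|]. split; [|apply pl_on_cat with v]; auto.
    + auto.
    + destruct (IH2 m) as [A1 A2]; auto; [lra|]. split; [apply pl_on_cat with v|]; auto.
Qed.

Lemma pl_on_surj u v : pl_on f u v ->
  forall y, f u <= y <= f v -> exists x, u <= x <= v /\ f x = y.
Proof.
  induction 1 as [u v k Huv _ _ Hf| u m w H1 IH1 H2 IH2]; intros y Hy.
  - rewrite (Hf v) in Hy by lra.
    assert (Hx := affine_preimage_between _ u v _ y (tpow_pos k) Hy).
    exists (u + (y - f u) / tpow k). split; [assumption|].
    rewrite Hf by assumption. field. apply tpow_neq0.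
  - apply pl_on_lt in H1. apply pl_on_lt in H2.
    destruct (Rle_lt_dec y (f m)).
    + destruct (IH1 y) as [x [Hx Hfx]]; [lra|]. exists x; split; [lra|assumption].
    + destruct (IH2 y) as [x [Hx Hfx]]; [lra|]. exists x; split; [lra|assumption].
Qed.

Lemma pl_on_germ_l u v : pl_on f u v ->
  exists k d, 0 < d /\ forall x, u <= x <= u + d -> f x = f u + tpow k * (x - u).
Proof.
  induction 1 as [u v k Huv _ _ Hf|]; [|assumption].
  exists k, (v - u). split; [lra|]. intros x Hx; apply Hf; lra.
Qed.

End PiecewiseLinear.

Lemma pl_on_comp_affine g u v k :
  u < v -> in_Ztau u -> in_Ztau (g u) -> affine_on g u v k ->
  forall f s t, pl_on f s t -> g u <= s -> t <= g v ->
  pl_on (fun x => f (g x)) (u + (s - g u) / tpow k) (u + (t - g u) / tpow k).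
Proof.
  intros Huv Hu Hgu Hg f s t Hf. assert (HK := tpow_pos k).
  assert (Hgv : g v = g u + tpow k * (v - u)) by (apply Hg; lra).
  induction Hf as [s t j Hst Hs Ht Hf| s m t H1 IH1 H2 IH2]; intros Hus Htv.
  - set (s' := u + (s - g u) / tpow k). set (t' := u + (t - g u) / tpow k).
    assert (Hs' : u <= s' <= v) by (apply affine_preimage_between; lra).
    assert (Ht' : u <= t' <= v) by (apply affine_preimage_between; lra).
    assert (Es : g s' = s) by (rewrite Hg by lra; unfold s'; field; lra).
    assert (Et : g t' = t) by (rewrite Hg by lra; unfold t'; field; lra).
    assert (Hst' : s' < t').
    { unfold s', t'. apply Rplus_lt_compat_l, Rmult_lt_compat_r; [apply Rinv_0_lt_compat|]; lra. }
    apply (pl_on_affine _ s' t' (j + k)); [assumption| | |].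
    1,2: unfold s', t', Rdiv; rewrite <- powerRZ_neg'; in_Ztau_auto.
    intros x Hx.
    assert (Egx : g x = s + tpow k * (x - s')).
    { rewrite (Hg x), <- Es, (Hg s') by lra. ring. }
    assert (0 <= tpow k * (x - s') <= t - s).
    { rewrite <- Et, <- Es, (Hg t'), (Hg s') by lra. split; nra. }
    rewrite Es, Egx, Hf, tpow_add by lra. ring.
  - apply pl_on_lt in H1. apply pl_on_lt in H2.
    apply pl_on_cat with (u + (m - g u) / tpow k); [apply IH1 | apply IH2]; lra.
Qed.

Lemma pl_on_comp g u v : pl_on g u v -> in_Ztau (g u) ->
  forall f, pl_on f (g u) (g v) -> pl_on (fun x => f (g x)) u v.
Proof.
  induction 1 as [u v k Huv Hu Hv Hg| u m w H1 IH1 H2 IH2]; intros Hgu f Hf.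
  - assert (Hgv : g v = g u + tpow k * (v - u)) by (apply Hg; lra).
    pose proof (pl_on_comp_affine g u v k Huv Hu Hgu Hg f _ _ Hf) as Hc.
    replace (u + (g u - g u) / tpow k) with u in Hc by (field; apply tpow_neq0).
    replace (u + (g v - g u) / tpow k) with v in Hc by (rewrite Hgv; field; apply tpow_neq0).
    apply Hc; lra.
  - assert (Hmono := pl_on_increasing g u w (pl_on_cat g u m w H1 H2)).
    apply pl_on_lt in H1 as Hum. apply pl_on_lt in H2 as Hmw.
    assert (Hgm : in_Ztau (g m)) by (eapply pl_on_Ztau_image; eauto).
    destruct (pl_on_split f _ _ Hf (g m)) as [F1 F2]; [split; apply Hmono; lra | assumption |].
    apply pl_on_cat with m; auto.
Qed.

Lemma pl_on_inv f fi u v : pl_on f u v -> in_Ztau (f u) -> (forall x, fi (f x) = x) ->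
  pl_on fi (f u) (f v).
Proof.
  intros H Hfu Hi. induction H as [u v k Huv Hu Hv Hf| u m w H1 IH1 H2 IH2].
  - assert (Hfv : f v = f u + tpow k * (v - u)) by (apply Hf; lra).
    assert (HK := tpow_pos k).
    apply (pl_on_piece fi (f u) (f v) u (- k)).
    + rewrite Hfv. nra.
    + assumption.
    + rewrite Hfv. in_Ztau_auto.
    + intros y Hy. rewrite Hfv in Hy.
      assert (Hx := affine_preimage_between _ u v _ y HK Hy).
      assert (Efx : f (u + (y - f u) / tpow k) = y)
        by (rewrite Hf by assumption; field; apply tpow_neq0).
      rewrite <- Efx at 1. rewrite Hi, powerRZ_neg'. field. apply tpow_neq0.
  - apply pl_on_cat with (f m); auto. apply IH2. eapply pl_on_Ztau_image; eauto.
Qed.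

Definition reflect (f : R -> R) : R -> R := fun x => 1 - f (1 - x).

Lemma reflect_reflect f : reflect (reflect f) = f.
Proof.
  apply functional_extensionality. intros x. unfold reflect.
  replace (1 - (1 - x)) with x by ring. ring.
Qed.

Lemma pl_on_reflect f u v : pl_on f u v -> pl_on (reflect f) (1 - v) (1 - u).
Proof.
  induction 1 as [u v k Huv Hu Hv Hf| u m w H1 IH1 H2 IH2].
  - apply (pl_on_affine _ (1 - v) (1 - u) k); [lra | in_Ztau_auto | in_Ztau_auto |].
    intros x Hx. unfold reflect. replace (1 - (1 - v)) with v by ring.
    rewrite (Hf v), (Hf (1 - x)) by lra. ring.
  - apply pl_on_cat with (1 - m); assumption.
Qed.


(* The last conjunct of [in_Ftau f] is literally [subdivision f 0 1]. *)
Definition subdivision (f : R -> R) (u v : R) : Prop :=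
  exists (n : nat) (xs : nat -> R) (ks : nat -> Z),
    (1 <= n)%nat /\ xs 0%nat = u /\ xs n = v /\
    (forall i, (i <= n)%nat -> in_Ztau (xs i)) /\
    (forall i, (i < n)%nat -> xs i < xs (S i)) /\
    (forall i, (i < n)%nat -> forall x, xs i <= x <= xs (S i) ->
        f x = f (xs i) + tpow (ks i) * (x - xs i)).

Lemma subdivision_cat f u v w : subdivision f u v -> subdivision f v w -> subdivision f u w.
Proof.
  intros (n1 & xs1 & ks1 & Hn1 & S1 & E1 & Z1 & L1 & A1)
         (n2 & xs2 & ks2 & Hn2 & S2 & E2 & Z2 & L2 & A2).
  set (xs i := if (i <? n1)%nat then xs1 i else xs2 (i - n1)%nat).
  set (ks i := if (i <? n1)%nat then ks1 i else ks2 (i - n1)%nat).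
  assert (Elo : forall i, (i <= n1)%nat -> xs i = xs1 i).
  { intros i Hi. unfold xs. destruct (Nat.ltb_spec i n1); [reflexivity|].
    replace i with n1 by lia. rewrite Nat.sub_diag, S2, E1. reflexivity. }
  assert (Ehi : forall i, (n1 <= i)%nat -> xs i = xs2 (i - n1)%nat).
  { intros i Hi. unfold xs. destruct (Nat.ltb_spec i n1); [lia | reflexivity]. }
  assert (Klo : forall i, (i < n1)%nat -> ks i = ks1 i).
  { intros i Hi. unfold ks. destruct (Nat.ltb_spec i n1); [reflexivity | lia]. }
  assert (Khi : forall i, (n1 <= i)%nat -> ks i = ks2 (i - n1)%nat).
  { intros i Hi. unfold ks. destruct (Nat.ltb_spec i n1); [lia | reflexivity]. }
  assert (Ehi' : forall i, (n1 <= i)%nat -> xs (S i) = xs2 (S (i - n1))).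
  { intros i Hi. rewrite Ehi by lia. f_equal. lia. }
  exists (n1 + n2)%nat, xs, ks. split; [lia|]. split; [rewrite Elo; auto; lia|].
  split; [rewrite Ehi by lia; replace (n1 + n2 - n1)%nat with n2 by lia; assumption|].
  split; [|split]; intros i Hi; destruct (Nat.lt_ge_cases i n1).
  - rewrite Elo by lia. apply Z1. lia.
  - rewrite Ehi by lia. apply Z2. lia.
  - rewrite !Elo by lia. apply L1. assumption.
  - rewrite Ehi, Ehi' by lia. apply L2. lia.
  - rewrite !Elo, Klo by lia. apply A1. assumption.
  - rewrite Ehi, Ehi', Khi by lia. apply A2. lia.
Qed.

Lemma subdivision_of_pl_on f u v : pl_on f u v -> subdivision f u v.
Proof.
  induction 1 as [u v k Huv Hu Hv Hf| u m w _ IH1 _ IH2].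
  - exists 1%nat, (fun i => match i with O => u | _ => v end), (fun _ => k).
    split; [lia|]. do 2 (split; [reflexivity|]).
    split; [intros [|i] _; assumption|].
    split; intros [|i] Hi; try lia; [assumption | apply Hf].
  - eapply subdivision_cat; eassumption.
Qed.

Lemma pl_on_of_subdivision f u v : subdivision f u v -> pl_on f u v.
Proof.
  intros (n & xs & ks & Hn & <- & <- & HZ & Hlt & Haff).
  assert (Hpiece : forall i, (i < n)%nat -> pl_on f (xs i) (xs (S i))).
  { intros i Hi.
    apply (pl_on_affine f _ _ (ks i)); [apply Hlt | apply HZ | apply HZ | exact (Haff i Hi)]; lia. }
  assert (Hpref : forall m, (1 <= m <= n)%nat -> pl_on f (xs 0%nat) (xs m)).
  { induction m as [|m IH]; intros Hm; [lia|].
    destruct (Nat.eq_dec m 0) as [->|Hm0]; [apply Hpiece; lia|].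
    apply pl_on_cat with (xs m); [apply IH | apply Hpiece]; lia. }
  apply Hpref. lia.
Qed.

Lemma in_Ftau_iff f : in_Ftau f <->
  (forall x, x < 0 \/ 1 < x -> f x = x) /\ f 0 = 0 /\ f 1 = 1 /\ pl_on f 0 1.
Proof.
  split; intros (Hout & H0 & H1 & Hf); repeat split; try assumption.
  - apply pl_on_of_subdivision. exact Hf.
  - apply subdivision_of_pl_on. exact Hf.
Qed.

(** * F_tau is a group *)

Section FtauGroup.
Variable f : R -> R.
Hypothesis Hf : in_Ftau f.

Lemma in_Ftau_out x : x < 0 \/ 1 < x -> f x = x.
Proof. apply Hf. Qed.

Lemma in_Ftau_0 : f 0 = 0.
Proof. apply Hf. Qed.

Lemma in_Ftau_1 : f 1 = 1.
Proof. apply Hf. Qed.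

Lemma in_Ftau_pl_on : pl_on f 0 1.
Proof. apply in_Ftau_iff, Hf. Qed.

Lemma in_Ftau_increasing x y : x < y -> f x < f y.
Proof.
  intros Hxy. assert (Hin := pl_on_increasing f 0 1 in_Ftau_pl_on).
  assert (Hunit : forall z, 0 <= z <= 1 -> 0 <= f z <= 1).
  { assert (Hle : forall a b, 0 <= a <= b -> b <= 1 -> f a <= f b).
    { intros a b Hab Hb. destruct (Req_dec a b) as [->|]; [lra|]. left; apply Hin; lra. }
    intros z Hz. assert (f 0 <= f z) by (apply Hle; lra). assert (f z <= f 1) by (apply Hle; lra).
    rewrite in_Ftau_0, in_Ftau_1 in *. lra. }
  destruct (Rlt_le_dec x 0) as [Hx0|Hx0].
  - rewrite (in_Ftau_out x (or_introl Hx0)).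
    destruct (Rle_lt_dec y 1) as [Hy1|Hy1]; [|rewrite (in_Ftau_out y (or_intror Hy1)); lra].
    destruct (Rlt_le_dec y 0) as [Hy0|Hy0]; [rewrite (in_Ftau_out y (or_introl Hy0)); lra|].
    pose proof (Hunit y (conj Hy0 Hy1)). lra.
  - destruct (Rle_lt_dec y 1) as [Hy1|Hy1]; [apply Hin; lra|].
    rewrite (in_Ftau_out y (or_intror Hy1)).
    destruct (Rle_lt_dec x 1) as [Hx1|Hx1]; [pose proof (Hunit x (conj Hx0 Hx1)); lra|].
    rewrite (in_Ftau_out x (or_intror Hx1)). lra.
Qed.

Lemma in_Ftau_monotone x y : x <= y -> f x <= f y.
Proof. intros [H | E]; [left; apply in_Ftau_increasing, H | right; rewrite E; reflexivity]. Qed.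

Lemma in_Ftau_has_inv : exists fi, is_inv f fi.
Proof.
  assert (Hsurj : forall y, exists x, f x = y).
  { intros y. destruct (Rlt_le_dec y 0); [exists y; apply in_Ftau_out; lra|].
    destruct (Rle_lt_dec y 1); [|exists y; apply in_Ftau_out; lra].
    destruct (pl_on_surj f 0 1 in_Ftau_pl_on y) as [x [_ Hx]];
      [rewrite in_Ftau_0, in_Ftau_1; lra|].
    exists x; exact Hx. }
  exists (fun y => proj1_sig (constructive_indefinite_description _ (Hsurj y))).
  intros x. split.
  - exact (proj2_sig (constructive_indefinite_description _ (Hsurj x))).
  - destruct (constructive_indefinite_description _ (Hsurj (f x))) as [x' Hx']; simpl.
    destruct (Rtotal_order x' x) as [Hlt|[->|Hlt]]; [|reflexivity|];
      apply in_Ftau_increasing in Hlt; lra.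
Qed.

End FtauGroup.

Lemma in_Ftau_id : in_Ftau (fun x => x).
Proof.
  apply in_Ftau_iff. repeat split; auto.
  apply (pl_on_piece _ 0 1 0 0); [lra | apply in_Ztau_0 | apply in_Ztau_1 |].
  intros x _. simpl. ring.
Qed.

Lemma in_Ftau_comp f g : in_Ftau f -> in_Ftau g -> in_Ftau (fun x => f (g x)).
Proof.
  intros Hf Hg. apply in_Ftau_iff. repeat split.
  - intros x Hx. rewrite (in_Ftau_out g Hg x Hx). apply in_Ftau_out; assumption.
  - rewrite (in_Ftau_0 g Hg). apply in_Ftau_0, Hf.
  - rewrite (in_Ftau_1 g Hg). apply in_Ftau_1, Hf.
  - apply pl_on_comp; [apply in_Ftau_pl_on, Hg | rewrite (in_Ftau_0 g Hg); apply in_Ztau_0 |].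
    rewrite (in_Ftau_0 g Hg), (in_Ftau_1 g Hg). apply in_Ftau_pl_on, Hf.
Qed.

Lemma in_Ftau_inv f fi : in_Ftau f -> is_inv f fi -> in_Ftau fi.
Proof.
  intros Hf Hi. apply in_Ftau_iff. repeat split.
  - intros x Hx. rewrite <- (in_Ftau_out f Hf x Hx) at 1. apply Hi.
  - rewrite <- (in_Ftau_0 f Hf) at 1. apply Hi.
  - rewrite <- (in_Ftau_1 f Hf) at 1. apply Hi.
  - rewrite <- (in_Ftau_0 f Hf), <- (in_Ftau_1 f Hf).
    apply pl_on_inv; [apply in_Ftau_pl_on, Hf | rewrite (in_Ftau_0 f Hf); apply in_Ztau_0 |].
    intros x; apply Hi.
Qed.

Lemma in_Ftau_reflect f : in_Ftau f -> in_Ftau (reflect f).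
Proof.
  intros Hf. apply in_Ftau_iff. repeat split; [unfold reflect..|].
  - intros x Hx. rewrite (in_Ftau_out f Hf (1 - x)) by lra. ring.
  - rewrite Rminus_0_r, (in_Ftau_1 f Hf). ring.
  - rewrite Rminus_diag, (in_Ftau_0 f Hf). ring.
  - pose proof (pl_on_reflect f 0 1 (in_Ftau_pl_on f Hf)) as H.
    rewrite Rminus_0_r, Rminus_diag in H. exact H.
Qed.

(** * Commutators and derived subgroups *)

(* [a^-1 b^-1 a b] for inverses [ai], [bi]: the factor that [derived_step] adds. *)
Definition commutator (a ai b bi : R -> R) : R -> R := fun x => ai (bi (a (b x))).

Ltac cancel_inv :=
  repeat match goal with
  | H : is_inv ?f ?g |- context [?f (?g ?x)] => rewrite (proj1 (H x))
  | H : is_inv ?f ?g |- context [?g (?f ?x)] => rewrite (proj2 (H x))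
  end.

Lemma is_inv_sym f g : is_inv f g -> is_inv g f.
Proof. intros H x; split; apply H. Qed.

Lemma is_inv_unique f g1 g2 : is_inv f g1 -> is_inv f g2 -> forall x, g1 x = g2 x.
Proof. intros H1 H2 x. rewrite <- (proj2 (H2 (g1 x))), (proj1 (H1 x)). reflexivity. Qed.

Lemma is_inv_ext f g f' g' : is_inv f g ->
  (forall x, f x = f' x) -> (forall x, g x = g' x) -> is_inv f' g'.
Proof. intros H Ef Eg x. rewrite <- Ef, <- Eg, <- Ef, <- Eg. apply H. Qed.

Lemma is_inv_commutator a ai b bi : is_inv a ai -> is_inv b bi ->
  is_inv (commutator a ai b bi) (commutator b bi a ai).
Proof.
  intros Ha Hb x. unfold commutator. split; cancel_inv; reflexivity.
Qed.

Section Derived.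
Variable H : (R -> R) -> Prop.

Lemma derived_ext f g : derived H f -> (forall x, f x = g x) -> derived H g.
Proof. intros D E. rewrite <- (functional_extensionality f g E). exact D. Qed.

Lemma derived_comp f g : derived H f -> derived H g -> derived H (fun x => f (g x)).
Proof.
  induction 1 as [|a ai b bi f Ha Hb Hia Hib _ IH]; intros Dg; [exact Dg|].
  apply (derived_step H a ai b bi (fun x => f (g x))); auto.
Qed.

Lemma derived_commutator a ai b bi : H a -> H b -> is_inv a ai -> is_inv b bi ->
  derived H (commutator a ai b bi).
Proof. intros. apply (derived_step H a ai b bi (fun x => x)); auto. apply derived_id. Qed.

Lemma derived_has_inv f : derived H f -> exists fi, derived H fi /\ is_inv f fi.
Proof.
  induction 1 as [|a ai b bi f Ha Hb Hia Hib _ [fi [Dfi Hfi]]].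
  - exists (fun x => x). split; [apply derived_id | intros x; split; reflexivity].
  - exists (fun x => fi (commutator b bi a ai x)). split.
    + apply derived_comp; [assumption | apply derived_commutator; assumption].
    + intros x. unfold commutator. split; cancel_inv; reflexivity.
Qed.

Lemma derived_inv f g : derived H f -> is_inv f g -> derived H g.
Proof.
  intros D Hi. destruct (derived_has_inv f D) as [fi [Dfi Hfi]].
  apply derived_ext with fi; [assumption|]. apply (is_inv_unique f); assumption.
Qed.

Lemma derived_conj c ci : is_inv c ci -> (forall a, H a -> H (fun x => c (a (ci x)))) ->
  forall f, derived H f -> derived H (fun x => c (f (ci x))).
Proof.
  intros Hc HH f. induction 1 as [|a ai b bi f Ha Hb Hia Hib _ IH].
  - apply derived_ext with (fun x => x); [apply derived_id|]. intros x. cancel_inv. reflexivity.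
  - set (conj g := fun x => c (g (ci x))).
    apply derived_ext with (fun x => commutator (conj a) (conj ai) (conj b) (conj bi) (conj f x)).
    + apply (derived_step H (conj a) (conj ai) (conj b) (conj bi) (conj f));
        [apply HH, Ha | apply HH, Hb | | | exact IH];
        intros x; unfold conj; split; cancel_inv; reflexivity.
    + intros x. unfold conj, commutator. cancel_inv. reflexivity.
Qed.

Lemma derived_derived_incl f : derived (derived H) f -> derived H f.
Proof.
  induction 1 as [|a ai b bi f Ha Hb Hia Hib _ IH]; [apply derived_id|].
  assert (Dai : derived H ai) by (apply (derived_inv a); assumption).
  assert (Dbi : derived H bi) by (apply (derived_inv b); assumption).
  apply (derived_comp ai), (derived_comp bi), (derived_comp a), (derived_comp b); assumption.
Qed.

End Derived.

(** * Supports and displacement *)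

Definition supported_in (f : R -> R) (P : R -> Prop) : Prop := forall x, ~ P x -> f x = x.

Definition displaces (h : R -> R) (P : R -> Prop) : Prop := forall x, P x -> ~ P (h x).

Section Supports.
Variables (f fi : R -> R) (P : R -> Prop).
Hypothesis Hf : is_inv f fi.
Hypothesis Hsupp : supported_in f P.

Lemma supported_in_inv : supported_in fi P.
Proof. intros x Hx. rewrite <- (Hsupp x Hx) at 1. apply Hf. Qed.

Lemma supported_in_stable x : P x -> P (f x).
Proof.
  intros Hx. apply NNPP. intros Hfx. apply Hfx.
  assert (E : x = f x).
  { transitivity (fi (f (f x))); [rewrite (Hsupp _ Hfx); symmetry |]; apply Hf. }
  rewrite <- E. exact Hx.
Qed.

End Supports.

Lemma displaces_inv h hi P : is_inv h hi -> displaces h P -> displaces hi P.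
Proof. intros Hh Hd x Hx Hhx. apply (Hd _ Hhx). rewrite (proj1 (Hh x)). exact Hx. Qed.

Lemma commute_of_disjoint_supports f fi g gi P Q : is_inv f fi -> is_inv g gi ->
  supported_in f P -> supported_in g Q -> (forall x, P x -> ~ Q x) ->
  forall x, f (g x) = g (f x).
Proof.
  intros Hf Hg Sf Sg HPQ x. destruct (classic (P x)) as [Px|nPx].
  - rewrite (Sg x), (Sg (f x)); auto. apply HPQ, (supported_in_stable f fi); assumption.
  - rewrite (Sf x nPx). destruct (classic (Q x)) as [Qx|nQx].
    + apply Sf. intros Pgx. apply (HPQ _ Pgx), (supported_in_stable g gi); assumption.
    + rewrite (Sg x nQx). apply Sf, nPx.
Qed.

Lemma supported_in_commutator g gi h hi P Q : is_inv g gi -> is_inv h hi -> supported_in g P ->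
  (forall x, ~ Q x -> ~ P x /\ ~ P (h x)) -> supported_in (commutator gi g h hi) Q.
Proof.
  intros Hg Hh Sg HPQ x Hx. destruct (HPQ x Hx) as [nPx nPhx]. unfold commutator.
  rewrite (supported_in_inv g gi P) by assumption. cancel_inv. apply Sg, nPx.
Qed.

(* [commutator gi g h hi] is [g] times the conjugate of [g^-1] by [h], which is supported in
   [h^-1 P], disjoint from [P]; such a factor does not change the commutator with [f]. *)
Lemma commutator_displace f fi g gi h hi P : is_inv f fi -> is_inv g gi -> is_inv h hi ->
  supported_in f P -> supported_in g P -> displaces h P ->
  forall z, commutator f fi g gi z =
            commutator f fi (commutator gi g h hi) (commutator h hi gi g) z.
Proof.
  intros Hf Hg Hh Sf Sg Dh z. unfold commutator.
  assert (Sfi := supported_in_inv f fi P Hf Sf).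
  assert (Sgi := supported_in_inv g gi P Hg Sg).
  destruct (classic (P (h z))) as [Phz|nPhz].
  - set (w := hi (gi (h z))).
    assert (Ehw : h w = gi (h z)) by (unfold w; cancel_inv; reflexivity).
    assert (nPw : ~ P w).
    { intros Pw. apply (Dh w Pw). rewrite Ehw.
      apply (supported_in_stable gi g); auto using is_inv_sym. }
    assert (nPz : ~ P z) by (intros Pz; apply (Dh z Pz Phz)).
    rewrite (Sg w nPw), (Sf w nPw), (Sgi w nPw), Ehw. cancel_inv.
    rewrite (Sg z nPz), (Sf z nPz), (Sgi z nPz). reflexivity.
  - rewrite (Sgi (h z) nPhz). cancel_inv.
    assert (nPhy : ~ P (h (gi (f (g z))))).
    { destruct (classic (P z)) as [Pz|nPz].
      - apply Dh. apply (supported_in_stable gi g); auto using is_inv_sym.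
        apply (supported_in_stable f fi); auto. apply (supported_in_stable g gi); auto.
      - rewrite (Sg z nPz), (Sf z nPz), (Sgi z nPz). exact nPhz. }
    rewrite (Sg _ nPhy). cancel_inv. reflexivity.
Qed.

Definition commutator_in (N : (R -> R) -> Prop) (x y : R -> R) : Prop :=
  forall xi yi, is_inv x xi -> is_inv y yi -> N (commutator x xi y yi).

Lemma is_inv_conj c ci f fi : is_inv c ci -> is_inv f fi ->
  is_inv (fun x => c (f (ci x))) (fun x => c (fi (ci x))).
Proof. intros Hc Hf x. split; cancel_inv; reflexivity. Qed.

Lemma commutator_in_conj H c ci x y : is_inv c ci ->
  (forall a, H a -> H (fun t => c (a (ci t)))) ->
  commutator_in (derived (derived H)) x y ->
  commutator_in (derived (derived H)) (fun t => c (x (ci t))) (fun t => c (y (ci t))).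
Proof.
  intros Hc HH Cxy xi yi Hx Hy.
  assert (Hunconj : forall f fi, is_inv (fun t => c (f (ci t))) fi ->
                    is_inv f (fun t => ci (fi (c t)))).
  { intros f fi Hf. apply (is_inv_ext _ _ _ _ (is_inv_conj ci c _ fi (is_inv_sym _ _ Hc) Hf));
      intros t; cancel_inv; reflexivity. }
  apply derived_ext with
    (fun t => c (commutator x (fun s => ci (xi (c s))) y (fun s => ci (yi (c s))) (ci t))).
  - apply derived_conj; [assumption | |apply Cxy; apply Hunconj; assumption].
    apply derived_conj; assumption.
  - intros t. unfold commutator. cancel_inv. reflexivity.
Qed.

Definition bijection_group (H : (R -> R) -> Prop) : Prop :=
  (forall f g, H f -> H g -> H (fun x => f (g x))) /\
  (forall f fi, H f -> is_inv f fi -> H fi) /\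
  (forall f, H f -> exists fi, is_inv f fi).

Section GroupOfBijections.
Variable H : (R -> R) -> Prop.
Hypothesis HG : bijection_group H.
Let H_comp := proj1 HG.
Let H_inv := proj1 (proj2 HG).
Let H_has_inv := proj2 (proj2 HG).

Lemma derived_derived_conj c ci : H c -> is_inv c ci ->
  forall f, derived (derived H) f -> derived (derived H) (fun x => c (f (ci x))).
Proof.
  intros Hc Hci. apply derived_conj; [assumption|]. apply derived_conj; [assumption|].
  intros a Ha. apply H_comp; [assumption|].
  apply (H_comp a ci); [assumption | apply (H_inv c); assumption].
Qed.

Lemma commutator_in_of_commute x y : (forall t, x (y t) = y (x t)) ->
  commutator_in (derived (derived H)) x y.
Proof.
  intros Hxy xi yi Hx Hy. apply derived_ext with (fun t => t); [apply derived_id|].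
  intros t. unfold commutator. rewrite Hxy. cancel_inv. reflexivity.
Qed.

Lemma commutator_in_sym x y : commutator_in (derived (derived H)) x y ->
  commutator_in (derived (derived H)) y x.
Proof.
  intros Cxy yi xi Hy Hx. apply (derived_inv _ (commutator x xi y yi)); [apply Cxy; assumption|].
  apply is_inv_commutator; assumption.
Qed.

(* [[x, y z] = [x, z] z^-1 [x, y] z] and [derived (derived H)] is normal in [H]. *)
Lemma commutator_in_comp_r x y z : H y -> H z ->
  commutator_in (derived (derived H)) x y -> commutator_in (derived (derived H)) x z ->
  commutator_in (derived (derived H)) x (fun t => y (z t)).
Proof.
  intros Hy Hz Cxy Cxz xi yzi Hx Hyz.
  destruct (H_has_inv y Hy) as [yi Hyi]. destruct (H_has_inv z Hz) as [zi Hzi].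
  assert (Eyz : forall t, yzi t = zi (yi t)).
  { apply (is_inv_unique (fun t => y (z t))); [assumption|].
    intros t; split; cancel_inv; reflexivity. }
  apply derived_ext with
    (fun t => commutator x xi z zi (zi (commutator x xi y yi (z t)))).
  - apply derived_comp; [apply Cxz; assumption|].
    apply (derived_derived_conj zi z);
      [apply (H_inv z); assumption | apply is_inv_sym, Hzi | apply Cxy; assumption].
  - intros t. unfold commutator. rewrite Eyz. cancel_inv. reflexivity.
Qed.

(* [[x, y^-1] = y [y, x] y^-1]. *)
Lemma commutator_in_inv_r x y yi : H y -> is_inv y yi ->
  commutator_in (derived (derived H)) x y -> commutator_in (derived (derived H)) x yi.
Proof.
  intros Hy Hyi Cxy xi yii Hx Hyii.
  assert (Eyii : forall t, yii t = y t)
    by (apply (is_inv_unique yi); [|apply is_inv_sym]; assumption).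
  apply derived_ext with (fun t => y (commutator y yi x xi (yi t))).
  - apply derived_derived_conj; [assumption | assumption |]. apply commutator_in_sym; assumption.
  - intros t. unfold commutator. rewrite Eyii. cancel_inv. reflexivity.
Qed.

Lemma commutator_in_comp_l x y z : H x -> H y ->
  commutator_in (derived (derived H)) x z -> commutator_in (derived (derived H)) y z ->
  commutator_in (derived (derived H)) (fun t => x (y t)) z.
Proof. intros. apply commutator_in_sym, commutator_in_comp_r; auto using commutator_in_sym. Qed.

(* With [k] the commutator of [g^-1] and [h], supported in [Q]: [[f,g] = [f,k]] since [h]
   displaces [P], and [[k,f] = [k,m]] with [m] the commutator of [f^-1] and [h'] since [h']
   displaces [Q]. *)
Lemma commutator_in_of_displacements f g h h' P Q : H f -> H g -> H h -> H h' ->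
  supported_in f P -> supported_in g P -> (forall x, P x -> Q x) ->
  displaces h P -> (forall x, P (h x) -> Q x) -> displaces h' Q ->
  commutator_in (derived (derived H)) f g.
Proof.
  intros Hf Hg Hh Hh' Sf Sg HPQ Dh HhPQ Dh' fi gi Hfi Hgi.
  destruct (H_has_inv h Hh) as [hi Hhi]. destruct (H_has_inv h' Hh') as [hi' Hhi'].
  set (k := commutator gi g h hi). set (ki := commutator h hi gi g).
  set (m := commutator fi f h' hi'). set (mi := commutator h' hi' fi f).
  assert (Hk : is_inv k ki) by (apply is_inv_commutator; auto using is_inv_sym).
  assert (Hm : is_inv m mi) by (apply is_inv_commutator; auto using is_inv_sym).
  assert (Sk : supported_in k Q).
  { apply (supported_in_commutator g gi h hi P Q); [assumption | assumption | assumption |].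
    intros x nQx. split; intros HP; apply nQx; auto. }
  assert (Dk : derived H k).
  { apply derived_commutator; [apply (H_inv g) | | apply is_inv_sym |]; assumption. }
  assert (Dm : derived H m).
  { apply derived_commutator; [apply (H_inv f) | | apply is_inv_sym |]; assumption. }
  apply (derived_inv _ (commutator k ki m mi)).
  - apply derived_commutator; assumption.
  - apply (is_inv_ext (commutator k ki f fi) (commutator f fi k ki)).
    + apply is_inv_commutator; assumption.
    + intros z. apply (commutator_displace k ki f fi h' hi' Q); auto.
      intros x Px. apply Sf. intros Pfx. apply Px, HPQ, Pfx.
    + intros z. symmetry. apply (commutator_displace f fi g gi h hi P); assumption.
Qed.

End GroupOfBijections.

(* Slope [tau] on [[0, tau c]], slope [1 + tau = tau^-1] on [[tau c, c]], identity elsewhere. *)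
Definition bump (c x : R) : R :=
  if Rle_dec x 0 then x
  else if Rle_dec x (tau * c) then tau * x
  else if Rle_dec x c then c - (1 + tau) * (c - x)
  else x.

Lemma bump_linear c x : 0 <= x <= tau * c -> bump c x = tau * x.
Proof.
  intros Hx. unfold bump. destruct (Rle_dec x 0); [assert (x = 0) as -> by lra; ring|].
  destruct (Rle_dec x (tau * c)); [reflexivity | lra].
Qed.

Section Bump.
Variable c : R.
Hypothesis Hc : 0 < c.

Lemma tau_mul_lt : 0 < tau * c < c.
Proof. pose proof tau_bounds. split; nra. Qed.

Lemma bump_fix x : x <= 0 \/ c <= x -> bump c x = x.
Proof.
  pose proof tau_mul_lt. intros Hx. unfold bump.
  repeat destruct (Rle_dec _ _); try lra. assert (x = c) as -> by lra. ring.
Qed.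

Lemma supported_in_bump : supported_in (bump c) (fun x => 0 < x < c).
Proof. intros x Hx. apply bump_fix. lra. Qed.

Lemma bump_le x : bump c x <= x.
Proof.
  pose proof tau_bounds. pose proof tau_mul_lt. unfold bump.
  repeat destruct (Rle_dec _ _); nra.
Qed.

Lemma bump_decrease a y z : 0 < a -> y < c -> a <= z <= y ->
  bump c z <= z - Rmin ((1 - tau) * a) (tau * (c - y)).
Proof.
  intros Ha Hy Hz. pose proof tau_bounds. pose proof tau_mul_lt.
  pose proof (Rmin_l ((1 - tau) * a) (tau * (c - y))).
  pose proof (Rmin_r ((1 - tau) * a) (tau * (c - y))).
  unfold bump. repeat destruct (Rle_dec _ _); nra.
Qed.

Lemma in_Ftau_bump : in_Ztau c -> c <= 1 -> in_Ftau (bump c).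
Proof.
  intros HZc Hc1. pose proof tau_mul_lt. apply in_Ftau_iff.
  split; [intros x Hx; apply bump_fix; lra|].
  split; [apply bump_fix; lra|]. split; [apply bump_fix; lra|].
  assert (P1 : pl_on (bump c) 0 (tau * c)).
  { apply (pl_on_piece _ 0 (tau * c) 0 1); [lra | in_Ztau_auto | in_Ztau_auto |].
    intros x Hx. rewrite tpow_1, bump_linear by lra. ring. }
  assert (P2 : pl_on (bump c) (tau * c) c).
  { apply (pl_on_piece _ (tau * c) c (tau * (tau * c)) (-1)); [lra | in_Ztau_auto | assumption |].
    intros x Hx. rewrite tpow_m1. unfold bump.
    repeat destruct (Rle_dec _ _); try lra; try (assert (x = tau * c) as -> by lra); ring. }
  destruct (Req_dec c 1) as [E|Hlt].
  - rewrite <- E. apply pl_on_cat with (tau * c); assumption.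
  - apply pl_on_cat with c; [apply pl_on_cat with (tau * c); assumption|].
    apply (pl_on_piece _ c 1 c 0); [lra | assumption | in_Ztau_auto |].
    intros x Hx. rewrite bump_fix by lra. simpl. ring.
Qed.

Lemma bump_iter_le n x : Nat.iter n (bump c) x <= x.
Proof.
  induction n as [|n IH]; simpl; [lra|]. pose proof (bump_le (Nat.iter n (bump c) x)). lra.
Qed.

Lemma bump_iter_lt a y : 0 < a -> y < c -> exists n, Nat.iter n (bump c) y < a.
Proof.
  intros Ha Hy. set (d := Rmin ((1 - tau) * a) (tau * (c - y))).
  assert (Hd : 0 < d).
  { pose proof tau_bounds. apply Rmin_glb_lt; apply Rmult_lt_0_compat; lra. }
  assert (Hstep : forall n, Nat.iter n (bump c) y < a \/ Nat.iter n (bump c) y <= y - INR n * d).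
  { induction n as [|n [IH|IH]]; simpl Nat.iter; [right; simpl; lra| |];
      pose proof (bump_le (Nat.iter n (bump c) y)); [left; lra|].
    destruct (Rlt_le_dec (Nat.iter n (bump c) y) a); [left; lra|].
    right. pose proof (bump_iter_le n y).
    pose proof (bump_decrease a y (Nat.iter n (bump c) y) Ha Hy ltac:(lra)) as Hdec.
    fold d in Hdec. rewrite S_INR. lra. }
  destruct (INR_archimed d (y - a) Hd) as [n Hn]. exists n. destruct (Hstep n); [assumption | lra].
Qed.

End Bump.

Lemma in_Ftau_iter f n : in_Ftau f -> in_Ftau (fun x => Nat.iter n f x).
Proof.
  intros Hf. induction n as [|n IH]; [apply in_Ftau_id|]. simpl. apply in_Ftau_comp; assumption.
Qed.

Lemma in_Ftau_group : bijection_group in_Ftau.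
Proof. split; [|split]; [apply in_Ftau_comp | apply in_Ftau_inv | apply in_Ftau_has_inv]. Qed.

(** * Compactly supported elements *)

Definition has_compact_support (f : R -> R) : Prop :=
  exists e, 0 < e /\ forall x, x <= e \/ 1 - e <= x -> f x = x.

Lemma in_Ftau_displaces h a b P : in_Ftau h -> h b < a ->
  (forall x, P x -> a <= x <= b) -> displaces h P.
Proof.
  intros Hh Hba HP x Px Phx. pose proof (HP x Px). pose proof (HP _ Phx).
  pose proof (in_Ftau_monotone h Hh x b). lra.
Qed.

Lemma supported_in_of_fix_near_ends f e e' : e <= e' ->
  (forall x, x <= e' \/ 1 - e' <= x -> f x = x) -> supported_in f (fun x => e < x < 1 - e).
Proof.
  intros He Hf x Hx. apply Hf.
  destruct (Rle_lt_dec x e); [left; lra | right].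
  apply Rnot_lt_le. intros Hlt. apply Hx. lra.
Qed.

(* A power [Xn] of [bump 1] pushes [1 - e] below [e], so [Xn] and its inverse displace
   [(e, 1 - e)], whose image under [Xn] lies in [[Xn e, 1 - e]]; a further power [Xm]
   displaces that interval. *)
Lemma commutator_in_compact f g : in_Ftau f -> in_Ftau g ->
  has_compact_support f -> has_compact_support g -> commutator_in Ftau'' f g.
Proof.
  intros Hf Hg [ef [Hef Ef]] [eg [Heg Eg]].
  set (e := Rmin ef eg). assert (He : 0 < e) by (apply Rmin_glb_lt; assumption).
  assert (HX : in_Ftau (bump 1)) by (apply in_Ftau_bump; [lra | apply in_Ztau_1 | lra]).
  destruct (bump_iter_lt 1 Rlt_0_1 e (1 - e) He ltac:(lra)) as [n Hn].
  set (Xn := fun x => Nat.iter n (bump 1) x).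
  assert (HXn : in_Ftau Xn) by apply in_Ftau_iter, HX.
  destruct (in_Ftau_has_inv Xn HXn) as [Yn HY].
  set (a := Xn e).
  assert (Ha : 0 < a) by (rewrite <- (in_Ftau_0 Xn HXn); apply in_Ftau_increasing; assumption).
  assert (Hae : a <= e) by apply bump_iter_le, Rlt_0_1.
  destruct (bump_iter_lt 1 Rlt_0_1 a (1 - e) Ha ltac:(lra)) as [m Hm].
  set (Xm := fun x => Nat.iter m (bump 1) x).
  apply (commutator_in_of_displacements _ in_Ftau_group f g Yn Xm
           (fun x => e < x < 1 - e) (fun x => a <= x <= 1 - e));
    [assumption | assumption | apply (in_Ftau_inv Xn); assumption | apply in_Ftau_iter, HX
    | | | | | |].
  - apply (supported_in_of_fix_near_ends f e ef); [apply Rmin_l | assumption].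
  - apply (supported_in_of_fix_near_ends g e eg); [apply Rmin_r | assumption].
  - intros x Hx. lra.
  - apply (displaces_inv Xn); [assumption|].
    apply (in_Ftau_displaces Xn e (1 - e)); [assumption | assumption | intros x Hx; lra].
  - intros x Hx. cbv beta in Hx. rewrite <- (proj1 (HY x)).
    pose proof (in_Ftau_monotone Xn HXn e (Yn x) ltac:(lra)) as Hmono. fold a in Hmono.
    pose proof (bump_iter_le 1 Rlt_0_1 n (Yn x)) as Hle. change (Xn (Yn x) <= Yn x) in Hle. lra.
  - apply (in_Ftau_displaces Xm a (1 - e));
      [apply in_Ftau_iter, HX | assumption | intros x Hx; exact Hx].
Qed.

(** * Generators *)

Definition bump_at_0 : R -> R := bump (tau ^ 2).

Definition bump_at_1 : R -> R := reflect bump_at_0.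

Lemma in_Ftau_bump_at_0 : in_Ftau bump_at_0.
Proof.
  pose proof tau_bounds.
  apply in_Ftau_bump; [rewrite tau_pow2; lra | in_Ztau_auto | rewrite tau_pow2; lra].
Qed.

Lemma in_Ftau_bump_at_1 : in_Ftau bump_at_1.
Proof. apply in_Ftau_reflect, in_Ftau_bump_at_0. Qed.

Lemma supported_in_reflect f P : supported_in f P -> supported_in (reflect f) (fun x => P (1 - x)).
Proof. intros Hf x Hx. unfold reflect. rewrite (Hf _ Hx). ring. Qed.

Lemma has_compact_support_reflect f : has_compact_support f -> has_compact_support (reflect f).
Proof.
  intros [e [He Hf]]. exists e. split; [assumption|].
  intros x Hx. unfold reflect. rewrite Hf by lra. ring.
Qed.

Lemma bump_at_0_bump_at_1_commute x : bump_at_0 (bump_at_1 x) = bump_at_1 (bump_at_0 x).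
Proof.
  pose proof tau_gt_half. pose proof tau_bounds. pose proof tau_pow2.
  destruct (in_Ftau_has_inv _ in_Ftau_bump_at_0) as [Ai HA].
  destruct (in_Ftau_has_inv _ in_Ftau_bump_at_1) as [Bi HB].
  apply (commute_of_disjoint_supports _ Ai _ Bi (fun x => 0 < x < tau ^ 2)
           (fun x => 0 < 1 - x < tau ^ 2)); [assumption | assumption | | | intros y Hy1 Hy2; lra].
  - apply supported_in_bump. lra.
  - apply (supported_in_reflect _ (fun x => 0 < x < tau ^ 2)), supported_in_bump. lra.
Qed.

Lemma has_compact_support_bump_at_0_div c w : 0 < c <= tau ^ 2 -> is_inv (bump c) w ->
  has_compact_support (fun x => bump_at_0 (w x)).
Proof.
  intros [Hc0 Hc] Hw. pose proof tau_bounds. rewrite tau_pow2 in Hc.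
  assert (Hwfix : forall x, x <= 0 \/ c <= x -> w x = x).
  { intros x Hx. apply (supported_in_inv (bump c) w _ Hw (supported_in_bump c Hc0)). lra. }
  exists (tau * (tau * c)). split; [apply Rmult_lt_0_compat; nra|].
  unfold bump_at_0. intros x [Hx|Hx]; [destruct (Rle_lt_dec x 0) as [Hx0|Hx0]|].
  - rewrite Hwfix by lra. apply bump_fix; [nra | lra].
  - set (y := x / tau). assert (Ey : tau * y = x) by (unfold y; field; lra).
    assert (Hy : 0 <= y <= tau * c) by (split; nra).
    rewrite <- Ey at 1. rewrite <- (bump_linear c y Hy), (proj2 (Hw y)).
    rewrite bump_linear; [exact Ey|]. rewrite tau_pow2. nra.
  - rewrite Hwfix by nra. apply bump_fix; [nra|]. rewrite tau_pow2. nra.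
Qed.

Lemma tau_pow_small e : 0 < e -> exists c, in_Ztau c /\ 0 < c <= tau ^ 2 /\ c < e.
Proof.
  intros He. pose proof tau_bounds.
  destruct (pow_lt_1_zero tau ltac:(rewrite Rabs_right; lra) e He) as [m Hm].
  exists (tau ^ (m + 2)). split; [in_Ztau_auto|].
  assert (Hpos : 0 < tau ^ (m + 2)) by (apply pow_lt; lra).
  split; [split; [assumption|] | rewrite <- (Rabs_right (tau ^ (m + 2))) by lra; apply Hm; lia].
  rewrite pow_add. pose proof (pow_incr tau 1 m ltac:(lra)). rewrite pow1 in *.
  pose proof (pow_lt tau 2 ltac:(lra)). nra.
Qed.

(* [bump_at_0 = e o bump c] with [e] compactly supported and [supp (bump c) = (0, c)] left
   of the support of [h]. *)
Lemma commutator_in_bump_at_0_compact h : in_Ftau h -> has_compact_support h ->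
  commutator_in Ftau'' bump_at_0 h.
Proof.
  intros Hh [eh [Heh Eh]]. pose proof tau_bounds.
  destruct (tau_pow_small eh Heh) as (c & HZc & [Hc0 Hc2] & Hceh).
  assert (Hbc : in_Ftau (bump c)).
  { apply in_Ftau_bump; [assumption | assumption | rewrite tau_pow2 in Hc2; lra]. }
  destruct (in_Ftau_has_inv _ Hbc) as [w Hw].
  destruct (in_Ftau_has_inv _ Hh) as [hi Hhi].
  set (e := fun x => bump_at_0 (w x)).
  assert (He : in_Ftau e).
  { unfold e.
    apply in_Ftau_comp; [apply in_Ftau_bump_at_0 | apply (in_Ftau_inv (bump c)); assumption]. }
  replace bump_at_0 with (fun x => e (bump c x))
    by (apply functional_extensionality; intros x; unfold e; cancel_inv; reflexivity).
  apply (commutator_in_comp_l _ in_Ftau_group); [assumption | assumption | |].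
  - apply commutator_in_compact; [assumption | assumption | | exists eh; split; assumption].
    apply (has_compact_support_bump_at_0_div c); [split|]; assumption.
  - apply commutator_in_of_commute.
    apply (commute_of_disjoint_supports _ w _ hi (fun x => 0 < x < c) (fun x => eh < x < 1 - eh));
      [assumption | assumption | apply supported_in_bump, Hc0 | | intros x Hx1 Hx2; lra].
    apply (supported_in_of_fix_near_ends h eh eh); [lra | assumption].
Qed.

Lemma commutator_in_bump_at_1_compact h : in_Ftau h -> has_compact_support h ->
  commutator_in Ftau'' bump_at_1 h.
Proof.
  intros Hh Hsh.
  rewrite <- (reflect_reflect h).
  apply (commutator_in_conj in_Ftau (fun x => 1 - x) (fun x => 1 - x));
    [intros x; split; ring | intros a Ha; apply in_Ftau_reflect, Ha |].
  apply commutator_in_bump_at_0_compact;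
    [apply in_Ftau_reflect | apply has_compact_support_reflect]; assumption.
Qed.

Definition linear_near_0 (f : R -> R) (p : Z) : Prop :=
  exists d, 0 < d /\ forall x, 0 <= x <= d -> f x = tpow p * x.

(* [f x = 1 - tau^q (1 - x)] near 1. *)
Definition linear_near_1 (f : R -> R) (q : Z) : Prop := linear_near_0 (reflect f) q.

Lemma in_Ftau_linear_near_0 f : in_Ftau f -> exists p, linear_near_0 f p.
Proof.
  intros Hf. destruct (pl_on_germ_l f 0 1 (in_Ftau_pl_on f Hf)) as [k [d [Hd E]]].
  exists k, d. split; [assumption|]. intros x Hx. rewrite E, (in_Ftau_0 f Hf) by lra. ring.
Qed.

Lemma in_Ftau_linear_near_1 f : in_Ftau f -> exists q, linear_near_1 f q.
Proof. intros Hf. apply in_Ftau_linear_near_0, in_Ftau_reflect, Hf. Qed.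

Lemma linear_near_0_comp f g p r : linear_near_0 f p -> linear_near_0 g r ->
  linear_near_0 (fun x => f (g x)) (p + r).
Proof.
  intros [d1 [Hd1 Ef]] [d2 [Hd2 Eg]]. assert (Hr := tpow_pos r).
  exists (Rmin d2 (d1 / tpow r)).
  split; [apply Rmin_glb_lt; [|apply Rdiv_lt_0_compat]; assumption|].
  intros x Hx. pose proof (Rmin_l d2 (d1 / tpow r)). pose proof (Rmin_r d2 (d1 / tpow r)).
  assert (E : tpow r * (d1 / tpow r) = d1) by (field; apply tpow_neq0).
  rewrite Eg, Ef, tpow_add by nra. ring.
Qed.

Lemma linear_near_0_inv f fi p : linear_near_0 f p -> is_inv f fi -> linear_near_0 fi (- p).
Proof.
  intros [d [Hd Ef]] Hi. assert (Hp := tpow_pos p).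
  exists (tpow p * d). split; [nra|]. intros y Hy.
  assert (E : tpow p * (y / tpow p) = y) by (field; apply tpow_neq0).
  assert (Hx : 0 <= y / tpow p <= d) by nra.
  rewrite <- E at 1. rewrite <- (Ef _ Hx), (proj2 (Hi _)), powerRZ_neg'. unfold Rdiv. ring.
Qed.

Lemma linear_near_1_comp f g p r : linear_near_1 f p -> linear_near_1 g r ->
  linear_near_1 (fun x => f (g x)) (p + r).
Proof.
  intros Hf Hg. unfold linear_near_1.
  replace (reflect (fun x => f (g x))) with (fun x => reflect f (reflect g x)).
  - apply linear_near_0_comp; assumption.
  - apply functional_extensionality. intros x. unfold reflect.
    replace (1 - (1 - g (1 - x))) with (g (1 - x)) by ring. reflexivity.
Qed.

Lemma linear_near_1_inv f fi q : linear_near_1 f q -> is_inv f fi -> linear_near_1 fi (- q).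
Proof.
  intros Hf Hi. apply (linear_near_0_inv (reflect f)); [assumption|].
  apply is_inv_conj; [intros x; split; ring | assumption].
Qed.

Lemma has_compact_support_of_linear f : in_Ftau f ->
  linear_near_0 f 0 -> linear_near_1 f 0 -> has_compact_support f.
Proof.
  intros Hf [d0 [Hd0 E0]] [d1 [Hd1 E1]]. simpl in E0, E1.
  exists (Rmin d0 d1). split; [apply Rmin_glb_lt; assumption|].
  pose proof (Rmin_l d0 d1). pose proof (Rmin_r d0 d1).
  intros x [Hx|Hx].
  - destruct (Rlt_le_dec x 0); [apply in_Ftau_out; auto|]. rewrite E0 by lra. ring.
  - destruct (Rle_lt_dec x 1); [|apply in_Ftau_out; auto].
    pose proof (E1 (1 - x) ltac:(lra)) as E. unfold reflect in E.
    replace (1 - (1 - x)) with x in E by ring. lra.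
Qed.

Lemma linear_near_0_bump_at_0 : linear_near_0 bump_at_0 1.
Proof.
  pose proof tau_bounds. exists (tau * tau ^ 2).
  split; [apply Rmult_lt_0_compat; [lra | apply pow_lt; lra]|].
  intros x Hx. rewrite tpow_1. apply bump_linear. exact Hx.
Qed.

Lemma linear_near_1_bump_at_0 : linear_near_1 bump_at_0 0.
Proof.
  pose proof tau_bounds. pose proof tau_pow2.
  exists (1 - tau ^ 2). split; [lra|]. intros x Hx. unfold reflect, bump_at_0.
  rewrite bump_fix by lra. simpl. ring.
Qed.

Lemma linear_near_0_bump_at_1 : linear_near_0 bump_at_1 0.
Proof. exact linear_near_1_bump_at_0. Qed.

Lemma linear_near_1_bump_at_1 : linear_near_1 bump_at_1 1.
Proof. unfold linear_near_1, bump_at_1. rewrite reflect_reflect. exact linear_near_0_bump_at_0. Qed.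

(* Induction on the exponents of the slopes at 0 and 1: composing with [bump_at_0], [bump_at_1]
   or their inverses brings them to 0, which leaves a compactly supported element. *)
Section Generation.
Variable S : (R -> R) -> Prop.
Hypothesis S_comp : forall f g, in_Ftau f -> in_Ftau g -> S f -> S g -> S (fun x => f (g x)).
Hypothesis S_inv : forall f fi, in_Ftau f -> is_inv f fi -> S f -> S fi.
Hypothesis S_bump_at_0 : S bump_at_0.
Hypothesis S_bump_at_1 : S bump_at_1.
Hypothesis S_compact : forall h, in_Ftau h -> has_compact_support h -> S h.

Lemma generated_cancel_l c ci f : in_Ftau c -> is_inv c ci -> S c -> in_Ftau f ->
  S (fun x => ci (f x)) -> S f.
Proof.
  intros Hc Hci Sc Hf Scif.
  replace f with (fun x => c (ci (f x)))
    by (apply functional_extensionality; intros; cancel_inv; reflexivity).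
  apply S_comp; [assumption | | assumption | assumption].
  apply in_Ftau_comp; [apply (in_Ftau_inv c ci) | ]; assumption.
Qed.

Lemma generated_of_linear_near_1 q f : in_Ftau f ->
  linear_near_0 f 0 -> linear_near_1 f q -> S f.
Proof.
  pose proof in_Ftau_bump_at_1 as G1.
  destruct (in_Ftau_has_inv _ G1) as [Bi HB].
  assert (GBi : in_Ftau Bi) by (apply (in_Ftau_inv bump_at_1); assumption).
  revert f. induction q as [|q IH|q IH] using Z.peano_ind; intros f Hf H0 H1.
  - apply S_compact; [assumption|]. apply has_compact_support_of_linear; assumption.
  - apply (generated_cancel_l bump_at_1 Bi); auto.
    apply IH; [apply in_Ftau_comp; assumption | |].
    + apply (linear_near_0_comp _ _ 0 0); [apply (linear_near_0_inv bump_at_1 Bi 0) |];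
        auto using linear_near_0_bump_at_1.
    + replace q with (- 1 + Z.succ q)%Z by lia.
      apply linear_near_1_comp; [apply (linear_near_1_inv bump_at_1 Bi 1) |];
        auto using linear_near_1_bump_at_1.
  - apply (generated_cancel_l Bi bump_at_1); eauto using is_inv_sym.
    apply IH; [apply in_Ftau_comp; assumption | |].
    + apply (linear_near_0_comp _ _ 0 0); auto using linear_near_0_bump_at_1.
    + replace q with (1 + Z.pred q)%Z by lia.
      apply linear_near_1_comp; auto using linear_near_1_bump_at_1.
Qed.

Lemma Ftau_generated f : in_Ftau f -> S f.
Proof.
  pose proof in_Ftau_bump_at_0 as G0.
  destruct (in_Ftau_has_inv _ G0) as [Ai HA].
  assert (GAi : in_Ftau Ai) by (apply (in_Ftau_inv bump_at_0); assumption).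
  intros Hf. destruct (in_Ftau_linear_near_0 f Hf) as [p Hp]. revert f Hf Hp.
  induction p as [|p IH|p IH] using Z.peano_ind; intros f Hf Hp.
  - destruct (in_Ftau_linear_near_1 f Hf) as [q Hq].
    apply (generated_of_linear_near_1 q); assumption.
  - apply (generated_cancel_l bump_at_0 Ai); auto.
    apply IH; [apply in_Ftau_comp; assumption |].
    replace p with (- 1 + Z.succ p)%Z by lia.
    apply linear_near_0_comp; [apply (linear_near_0_inv bump_at_0 Ai 1) |];
      auto using linear_near_0_bump_at_0.
  - apply (generated_cancel_l Ai bump_at_0); eauto using is_inv_sym.
    apply IH; [apply in_Ftau_comp; assumption |].
    replace p with (1 + Z.pred p)%Z by lia.
    apply linear_near_0_comp; auto using linear_near_0_bump_at_0.
Qed.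

End Generation.

(** * F_tau' is perfect *)

Lemma commutator_in_Ftau_r x : in_Ftau x ->
  commutator_in Ftau'' x bump_at_0 -> commutator_in Ftau'' x bump_at_1 ->
  (forall h, in_Ftau h -> has_compact_support h -> commutator_in Ftau'' x h) ->
  forall y, in_Ftau y -> commutator_in Ftau'' x y.
Proof.
  intros Hx C0 C1 Ccpt. apply Ftau_generated; [| |assumption..].
  - intros f g Hf Hg. apply (commutator_in_comp_r _ in_Ftau_group); assumption.
  - intros f fi Hf Hfi. apply (commutator_in_inv_r _ in_Ftau_group); assumption.
Qed.

Lemma commutator_in_bump_at_0 y : in_Ftau y -> commutator_in Ftau'' bump_at_0 y.
Proof.
  apply commutator_in_Ftau_r;
    [apply in_Ftau_bump_at_0 | apply commutator_in_of_commute; reflexivity | |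
     apply commutator_in_bump_at_0_compact].
  apply commutator_in_of_commute, bump_at_0_bump_at_1_commute.
Qed.

Lemma commutator_in_bump_at_1 y : in_Ftau y -> commutator_in Ftau'' bump_at_1 y.
Proof.
  apply commutator_in_Ftau_r;
    [apply in_Ftau_bump_at_1 | | apply commutator_in_of_commute; reflexivity |
     apply commutator_in_bump_at_1_compact].
  apply commutator_in_of_commute. intros t. symmetry. apply bump_at_0_bump_at_1_commute.
Qed.

Lemma commutator_in_compact_l h y : in_Ftau h -> has_compact_support h -> in_Ftau y ->
  commutator_in Ftau'' h y.
Proof.
  intros Hh Hsh. apply commutator_in_Ftau_r; [assumption | | |].
  - apply commutator_in_sym, commutator_in_bump_at_0_compact; assumption.
  - apply commutator_in_sym, commutator_in_bump_at_1_compact; assumption.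
  - intros h' Hh' Hsh'. apply commutator_in_compact; assumption.
Qed.

Lemma commutator_in_Ftau x y : in_Ftau x -> in_Ftau y -> commutator_in Ftau'' x y.
Proof.
  intros Hx. apply commutator_in_Ftau_r; [assumption | | |].
  - apply commutator_in_sym, commutator_in_bump_at_0, Hx.
  - apply commutator_in_sym, commutator_in_bump_at_1, Hx.
  - intros h Hh Hsh. apply commutator_in_sym, commutator_in_compact_l; assumption.
Qed.

Theorem mainTheorem17 : forall f : R -> R, Ftau' f <-> Ftau'' f.
Proof.
  intros f. split.
  - induction 1 as [|a ai b bi g Ha Hb Hai Hbi _ IH]; [apply derived_id|].
    apply (derived_comp _ (commutator a ai b bi)); [|exact IH].
    apply commutator_in_Ftau; assumption.
  - apply derived_derived_incl.
Qed.
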